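(* For every $z_j\in Z_\theta$ and every $t=0,1,\dots,T-2$, $\bar\omega_t(z_j)\le U^\omega_t(z_j)\le\bar U^\omega_t(\theta)$, where, with $\mu_t(0)=z_j$ and $\mu_t(i)=\max(\mu_t(i-1),S^U_{t+i-1})+\theta$ for $i=1,\dots,T-2-t$, $$U^\omega_t(z_j)=\theta\sum_{i=0}^{T-2-t}\alpha^i\gamma_{t+i}+\theta\sum_{i=0}^{T-2-t}\sum_{n=1}^{T-1-t-i}\alpha^{n+i}\gamma_{t+i+n}\Big[\prod_{m=0}^{n-1}F_{t+i+m}\big(S^U_{t+i}+(m+1)\theta-s_{t+i+m+1}\big)+\prod_{m=0}^{n-1}F_{t+i+m}\big(\max(\mu_t(i),S^U_{t+i})+(m+1)\theta-s_{t+i+m+1}\big)\Big],$$ $$\bar U^\omega_t(\theta)=\theta\sum_{i=0}^{T-2-t}\alpha^i\gamma_{t+i}+2\theta\sum_{i=0}^{T-2-t}\sum_{n=1}^{T-1-t-i}\alpha^{n+i}\gamma_{t+i+n}.$$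
   Context: Model. Fix an integer horizon $T\ge 2$, a discount factor $\alpha\in(0,1]$, and for $t=0,\dots,T-1$: unit ordering costs $c_t\in\mathbb R$, a salvage coefficient $c_T\in\mathbb R$, setup costs $K_t\ge 0$, functions $G_t:\mathbb R\to\mathbb R$, and independent nonnegative random demands $D_0,\dots,D_{T-1}$ with right-continuous distribution functions $F_t$ and finite means; all expectations appearing are assumed finite. Put $C_t(y)=(c_t-\alpha c_{t+1})y+G_t(y)+\alpha c_{t+1}E[D_t]$. Standing assumptions: (i) each $C_t$ is convex with $C_t(y)\to+\infty$ as $|y|\to\infty$; (ii) $K_t\ge \alpha K_{t+1}$ for $t=0,\dots,T-2$; (iii) there are constants $\gamma_t\ge 0$ with $|C_t(x)-C_t(y)|\le\gamma_t|x-y|$ for all $x,y$. Grid construction. Fix $\theta>0$, $z_m=m\theta$, $Z_\theta=\{z_m:m\in\mathbb Z\}$, $f_t(n)=F_t(z_{n+1})-F_t(z_n)$ ($n\ge -1$). $C^m_t=\min\{y: C_t(y)=\min_x C_t(x)\}$; with $z_{n_0}<C^m_t\le z_{n_0+1}$, $S^U_t=\min\{z_m\in Z_\theta: z_m\ge C^m_t,\ C_t(z_m)>C_t(z_{n_0})+K_t\}$. $s_{T-1}$ is a point with $s_{T-1}\le C^m_{T-1}$, $C_{T-1}(s_{T-1})=C_{T-1}(C^m_{T-1})+K_{T-1}$; $\bar I_{T-1}=s_{T-1}$. For $t=T-2,\dots,0$: $I_t=\max\{z_m\in Z_\theta: z_m<\min(\bar I_{t+1}-\theta,C^m_t)\}$,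 $\bar I_t=\max\{z_m\in Z_\theta: z_m\le I_t,\ C_t(z_m)>C_t(I_t)+K_t\}+\theta$. $H_{T-1}=C_{T-1}$, $S_{T-1}=C^m_{T-1}$; $V_t(y)=H_t(S_t)+K_t$ for $y<s_t$, $V_t(y)=H_t(y)$ for $y\ge s_t$. For $t=T-2,\dots,0$: $H_t(y)=C_t(y)+\alpha\sum_{n=-1}^\infty V_{t+1}(y-z_n)f_t(n)$; $S_t=\max\{z_m\in Z_\theta: I_t\le z_m\le S^U_t,\ H_t(z_m)=\min\{H_t(z_n):z_n\in Z_\theta, I_t\le z_n\le S^U_t\}\}$; $s_t=S_t$ if $K_t=0$, else $s_t=\min\{z_m\in Z_\theta:\bar I_t\le z_m\le S_t,\ H_t(z_m)\le H_t(S_t)+K_t\}$. Estimate functions. $\psi_{T-1}(x,y)=\bar\psi_{T-1}(x,y)=\gamma_{T-1}x$; $\varphi_{T-1}(x,y)=\bar\varphi_{T-1}(x,y)=0$ if $y<s_{T-1}$ and $=\gamma_{T-1}x$ if $y\ge s_{T-1}$. For $t=0,\dots,T-2$, with $n$ the integer such that $z_{n-1}\le y-s_{t+1}<z_n$: $\psi_t(x,y)=\gamma_tx$ if $y<s_{t+1}-\theta$, else $\psi_t(x,y)=\gamma_tx+\alpha\sum_{m=-1}^{n-1}\varphi_{t+1}(x,y-z_m)f_t(m)$; $\varphi_t(x,y)=0$ if $y<s_t$, $=\psi_t(y-s_t,y)$ if $y\ge s_t$ and $y-x<s_t$, $=\psi_t(x,y)$ if $y\ge s_t$ and $y-x\ge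 s_t$. Likewise $\bar\psi_t(x,y)=\gamma_tx$ if $y<s_{t+1}-\theta$, else $\bar\psi_t(x,y)=\gamma_tx+\alpha\sum_{m=-1}^{n-1}\bar\varphi_{t+1}(x,y-z_m)f_t(m)$; $\bar\varphi_t(x,y)=0$ if $y<s_t$, $=\bar\psi_t(y-s_t+\theta,y)$ if $y\ge s_t$ and $y-x<s_t$, $=\bar\psi_t(x,y)$ if $y\ge s_t$ and $y-x\ge s_t$. Error-bound functions. $\omega_{T-1}\equiv\bar\omega_{T-1}\equiv 0$, $\eta_{T-1}=0$. For $t=T-2,\dots,0$: $\omega_t(x)=\psi_t(\theta,x)-\gamma_t\theta+\alpha\sum_{n=-1}^\infty\bar\omega_{t+1}(x-z_n)f_t(n)$; $\eta_t=\bar\psi_t(\theta,S^U_t)+\omega_t(S^U_t)$; $\bar\omega_t(x)=\eta_t$ if $x\le S^U_t$ and $\bar\omega_t(x)=\max(\eta_t,\omega_t(x))$ if $x>S^U_t$. *)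

From Stdlib Require Import Reals ZArith List ClassicalEpsilon.
From Coquelicot Require Import Coquelicot.
Open Scope R_scope.

Record model := Model {
  hor : nat;
  alp : R;                (* discount factor alpha *)
  cc  : nat -> R;         (* c_t, t = 0..T (c_T salvage) *)
  KK  : nat -> R;         (* setup costs K_t *)
  GG  : nat -> R -> R;
  FF  : nat -> R -> R;    (* distribution function F_t of D_t *)
  ED  : nat -> R;         (* E[D_t] *)
  gam : nat -> R;         (* Lipschitz constants gamma_t *)
  th  : R                 (* grid step theta *)
}.

(** finite sums / products over lo <= i <= hi (empty if hi < lo) *)
Definition sumR (lo hi : nat) (g : nat -> R) : R :=
  fold_right Rplus 0 (map g (seq lo (S hi - lo))).
Definition prodR (lo hi : nat) (g : nat -> R) : R :=
  fold_right Rmult 1 (map g (seq lo (S hi - lo))).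

(** least / greatest element of a set of reals (chosen by epsilon;
    it is the unique such element whenever one exists). *)
Definition Rleast (A : R -> Prop) : R :=
  epsilon (inhabits 0) (fun x => A x /\ forall y, A y -> x <= y).
Definition Rgreatest (A : R -> Prop) : R :=
  epsilon (inhabits 0) (fun x => A x /\ forall y, A y -> y <= x).

Definition nonneg_cdf (F : R -> R) : Prop :=
  (forall x y, x <= y -> F x <= F y) /\
  (forall x, filterlim F (at_right x) (locally (F x))) /\
  (forall x, x < 0 -> F x = 0) /\
  filterlim F (Rbar_locally p_infty) (locally 1).

Definition convexR (f : R -> R) : Prop :=
  forall x y l, 0 <= l <= 1 -> f (l * x + (1 - l) * y) <= l * f x + (1 - l) * f y.


Definition Ct (p : model) (t : nat) (y : R) : R :=
  (cc p t - alp p * cc p (S t)) * y + GG p t y + alp p * cc p (S t) * ED p t.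

Definition zz (p : model) (m : Z) : R := IZR m * th p.
Definition ongrid (p : model) (x : R) : Prop := exists m : Z, x = zz p m.
Definition fprob (p : model) (t : nat) (n : Z) : R :=
  FF p t (zz p (n + 1)) - FF p t (zz p n).
Definition Esum (p : model) (t : nat) (g : R -> R) : R :=
  Series (fun j : nat => g (zz p (Z.of_nat j - 1)) * fprob p t (Z.of_nat j - 1)).

Definition Cm (p : model) (t : nat) : R :=
  Rleast (fun y => forall x, Ct p t y <= Ct p t x).
Definition zn0 (p : model) (t : nat) : R :=
  Rgreatest (fun z => ongrid p z /\ z < Cm p t).
Definition SU (p : model) (t : nat) : R :=
  Rleast (fun z => ongrid p z /\ Cm p t <= z /\ Ct p t z > Ct p t (zn0 p t) + KK p t).
Definition sLast (p : model) : R :=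
  let t := (hor p - 1)%nat in
  epsilon (inhabits 0) (fun y => y <= Cm p t /\ Ct p t y = Ct p t (Cm p t) + KK p t).

(** The backward recursion: data (Ibar_t, S_t, s_t, H_t) at stage t. *)
Record stage := Stage { sIb : R; sS : R; ss : R; sH : R -> R }.

Definition Vof (p : model) (t : nat) (st : stage) (y : R) : R :=
  if Rlt_dec y (ss st) then sH st (sS st) + KK p t else sH st y.

(** stg p k = data at stage t = T-1-k *)
Fixpoint stg (p : model) (k : nat) : stage :=
  match k with
  | O => let t := (hor p - 1)%nat in Stage (sLast p) (Cm p t) (sLast p) (Ct p t)
  | S k' =>
    let t := (hor p - 1 - S k')%nat in
    let nx := stg p k' in
    let I := Rgreatest (fun z => ongrid p z /\ z < Rmin (sIb nx - th p) (Cm p t)) in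
    let Ib := Rgreatest (fun z => ongrid p z /\ z <= I /\ Ct p t z > Ct p t I + KK p t)
              + th p in
    let H := fun y => Ct p t y + alp p * Esum p t (fun z => Vof p (S t) nx (y - z)) in
    let S0 := Rgreatest (fun z => ongrid p z /\ I <= z <= SU p t /\
                 forall w, ongrid p w -> I <= w <= SU p t -> H z <= H w) in
    let s := if Req_EM_T (KK p t) 0 then S0
             else Rleast (fun z => ongrid p z /\ Ib <= z <= S0 /\ H z <= H S0 + KK p t) in
    Stage Ib S0 s H
  end.

Definition s_ (p : model) (t : nat) : R := ss (stg p (hor p - 1 - t)).

(** the integer n with z_{n-1} <= y - s_{t+1} < z_n *)
Definition nidx (p : model) (t : nat) (y : R) : Z :=
  (Int_part ((y - s_ p (S t)) / th p) + 1)%Z.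

(** (psi_t, phi_t) for t = T-1-k; bar = true gives (psibar_t, phibar_t). *)
Fixpoint psiphi (p : model) (bar : bool) (k : nat) : (R -> R -> R) * (R -> R -> R) :=
  match k with
  | O => let t := (hor p - 1)%nat in
         (fun x _ => gam p t * x,
          fun x y => if Rlt_dec y (s_ p t) then 0 else gam p t * x)
  | S k' =>
    let t := (hor p - 1 - S k')%nat in
    let phn := snd (psiphi p bar k') in
    let ps := fun x y =>
      if Rlt_dec y (s_ p (S t) - th p) then gam p t * x
      else gam p t * x + alp p *
        sumR 0 (Z.to_nat (nidx p t y))
          (fun j => phn x (y - zz p (Z.of_nat j - 1)) * fprob p t (Z.of_nat j - 1)) in
    (ps,
     fun x y => if Rlt_dec y (s_ p t) then 0
                else if Rlt_dec (y - x) (s_ p t)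
                     then ps (y - s_ p t + (if bar then th p else 0)) y
                     else ps x y)
  end.

Definition psiF (p : model) (t : nat) := fst (psiphi p false (hor p - 1 - t)).
Definition phiF (p : model) (t : nat) := snd (psiphi p false (hor p - 1 - t)).
Definition psibF (p : model) (t : nat) := fst (psiphi p true (hor p - 1 - t)).
Definition phibF (p : model) (t : nat) := snd (psiphi p true (hor p - 1 - t)).

(** (omega_t, eta_t, omegabar_t) for t = T-1-k *)
Fixpoint omk (p : model) (k : nat) : (R -> R) * R * (R -> R) :=
  match k with
  | O => (fun _ => 0, 0, fun _ => 0)
  | S k' =>
    let t := (hor p - 1 - S k')%nat in
    let obn := snd (omk p k') in
    let w := fun x => psiF p t (th p) x - gam p t * th p
                      + alp p * Esum p t (fun z => obn (x - z)) in
    let eta := psibF p t (th p) (SU p t) + w (SU p t) in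
    (w, eta, fun x => if Rle_dec x (SU p t) then eta else Rmax eta (w x))
  end.

Definition omegaF (p : model) (t : nat) := fst (fst (omk p (hor p - 1 - t))).
Definition etaF (p : model) (t : nat) := snd (fst (omk p (hor p - 1 - t))).
Definition omegabar (p : model) (t : nat) := snd (omk p (hor p - 1 - t)).

Fixpoint mu (p : model) (t : nat) (z : R) (i : nat) : R :=
  match i with
  | O => z
  | S i' => Rmax (mu p t z i') (SU p (t + i')) + th p
  end.

Definition Uomega (p : model) (t : nat) (z : R) : R :=
  let T := hor p in
  th p * sumR 0 (T - 2 - t) (fun i => alp p ^ i * gam p (t + i))
  + th p * sumR 0 (T - 2 - t) (fun i =>
      sumR 1 (T - 1 - t - i) (fun n =>
        alp p ^ (n + i) * gam p (t + i + n) *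
        ( prodR 0 (n - 1) (fun m =>
             FF p (t + i + m) (SU p (t + i) + INR (m + 1) * th p - s_ p (t + i + m + 1)))
        + prodR 0 (n - 1) (fun m =>
             FF p (t + i + m) (Rmax (mu p t z i) (SU p (t + i)) + INR (m + 1) * th p
                               - s_ p (t + i + m + 1)))))).

Definition Ubar (p : model) (t : nat) : R :=
  let T := hor p in
  th p * sumR 0 (T - 2 - t) (fun i => alp p ^ i * gam p (t + i))
  + 2 * th p * sumR 0 (T - 2 - t) (fun i =>
      sumR 1 (T - 1 - t - i) (fun n => alp p ^ (n + i) * gam p (t + i + n))).

Definition standing (p : model) : Prop :=
  (2 <= hor p)%nat /\ 0 < alp p <= 1 /\ 0 < th p /\
  (forall t, (t < hor p)%nat ->
     nonneg_cdf (FF p t) /\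
     (* finite mean: E[D_t] = int_0^oo (1 - F_t) *)
     is_RInt_gen (fun x => 1 - FF p t x) (at_point 0) (Rbar_locally p_infty) (ED p t)) /\
  (forall t, (t < hor p)%nat -> 0 <= KK p t) /\
  (forall t, (t < hor p)%nat ->
     convexR (Ct p t) /\ is_lim (Ct p t) p_infty p_infty /\ is_lim (Ct p t) m_infty p_infty) /\
  (forall t, (t <= hor p - 2)%nat -> alp p * KK p (S t) <= KK p t) /\
  (forall t, (t < hor p)%nat ->
     0 <= gam p t /\ forall x y, Rabs (Ct p t x - Ct p t y) <= gam p t * Rabs (x - y)).

From Stdlib Require Import Reals ZArith List Lia Lra Classical ClassicalEpsilon Wf_nat.
From Coquelicot Require Import Coquelicot.
Open Scope R_scope.

(** Let [A_t(y) = sum_(n>=1) alpha^n gamma_(t+n) prod_(m<n) F_(t+m)(y+(m+1)theta-s_(t+m+1))]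
    and [B_t = sum_(n>=1) alpha^n gamma_(t+n)].  Splitting off [n = 1] gives
    [A_t(y) = alpha F_t(y+theta-s_(t+1)) (gamma_(t+1) + A_(t+1)(y+theta))] and
    [B_t = alpha (gamma_(t+1) + B_(t+1))], whence [0 <= A_t <= B_t], [A_t] nondecreasing.

    1. By backward induction, [psi_t(x,y) <= x (gamma_t + A_t(y))] for [x >= 0],
       and likewise for [phi_t] and for the barred versions at grid points
       (this needs the reorder points [s_t] to be grid points).
    2. Hence, if [W >= 0] is nondecreasing and bounds [omegabar_(t+1)], then
       [omegabar_t(z) <= theta G_t(z) + alpha W(max(z, S^U_t) + theta)] with
       [G_t(z) = gamma_t + A_t(S^U_t) + A_t(max(z, S^U_t))]: demand is
       nonnegative, so expectations of [W(x - D)] are at most [W(x + theta)].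
    3. [U^omega_t(z) = theta sum_i alpha^i G_(t+i)(mu_t(i))] satisfies exactly this
       recursion, so [omegabar_t <= U^omega_t] by backward induction; and
       [G_t <= gamma_t + 2 B_t] termwise gives [U^omega_t <= Ubar^omega_t]. *)

Lemma map_seq_shift {A : Type} (g : nat -> A) lo n :
  map g (seq (S lo) n) = map (fun i => g (S i)) (seq lo n).
Proof. rewrite <- seq_shift, map_map. reflexivity. Qed.

Lemma sumR_single lo g : sumR lo lo g = g lo.
Proof. unfold sumR. replace (S lo - lo)%nat with 1%nat by lia. simpl. ring. Qed.

Lemma sumR_first lo hi g : (lo <= hi)%nat -> sumR lo hi g = g lo + sumR (S lo) hi g.
Proof.
  intros H. unfold sumR. replace (S hi - lo)%nat with (S (S hi - S lo)) by lia.
  reflexivity.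
Qed.

Lemma sumR_shift lo hi g : sumR (S lo) (S hi) g = sumR lo hi (fun i => g (S i)).
Proof.
  unfold sumR. replace (S (S hi) - S lo)%nat with (S hi - lo)%nat by lia.
  rewrite map_seq_shift. reflexivity.
Qed.

Lemma sumR_last hi g : sumR 0 (S hi) g = sumR 0 hi g + g (S hi).
Proof.
  unfold sumR. rewrite !Nat.sub_0_r, seq_S, map_app, fold_right_app.
  change (fold_right Rplus 0 (map g ((0 + S hi)%nat :: nil))) with (g (S hi) + 0).
  generalize (map g (seq 0 (S hi))) as l.
  induction l as [|a l IH]; simpl; [ring | rewrite IH; ring].
Qed.

Lemma sumR_ext lo hi g h :
  (forall i, (lo <= i)%nat -> g i = h i) -> sumR lo hi g = sumR lo hi h.
Proof.
  intros H. unfold sumR. f_equal. apply map_ext_in. intros a Ha.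
  apply in_seq in Ha. apply H. lia.
Qed.

Lemma sumR_plus lo hi g h : sumR lo hi (fun i => g i + h i) = sumR lo hi g + sumR lo hi h.
Proof. unfold sumR. induction (seq lo (S hi - lo)); simpl; [ring | rewrite IHl; ring]. Qed.

Lemma sumR_scal lo hi c g : sumR lo hi (fun i => c * g i) = c * sumR lo hi g.
Proof. unfold sumR. induction (seq lo (S hi - lo)); simpl; [ring | rewrite IHl; ring]. Qed.

Lemma sumR_le lo hi g h :
  (forall i, (lo <= i <= hi)%nat -> g i <= h i) -> sumR lo hi g <= sumR lo hi h.
Proof.
  intros H. unfold sumR.
  assert (Hin : forall i, In i (seq lo (S hi - lo)) -> g i <= h i)
    by (intros i Hi; apply in_seq in Hi; apply H; lia).
  induction (seq lo (S hi - lo)) as [|a l IH]; simpl; [lra|].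
  pose proof (Hin a (or_introl eq_refl)).
  assert (fold_right Rplus 0 (map g l) <= fold_right Rplus 0 (map h l))
    by (apply IH; intros i Hi; apply Hin; right; exact Hi).
  lra.
Qed.

Lemma sumR_nonneg lo hi g : (forall i, (lo <= i <= hi)%nat -> 0 <= g i) -> 0 <= sumR lo hi g.
Proof.
  intros H. replace 0 with (sumR lo hi (fun _ => 0)) at 1.
  - apply sumR_le. exact H.
  - unfold sumR. induction (seq lo (S hi - lo)) as [|a l IH]; simpl; [reflexivity | lra].
Qed.

Lemma sumR_telescope_le (a h : nat -> R) W M :
  (forall j, a j <= W * (h (S j) - h j)) -> sumR 0 M a <= W * (h (S M) - h O).
Proof.
  intros Ha. induction M as [|M IH].
  - rewrite sumR_single. apply Ha.
  - rewrite sumR_last. specialize (Ha (S M)). lra.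
Qed.

Lemma sumR_sum_n a n : sumR 0 n a = sum_n a n.
Proof.
  induction n as [|n IH].
  - rewrite sumR_single, sum_O. reflexivity.
  - rewrite sumR_last, sum_Sn, IH. reflexivity.
Qed.

Lemma prodR_single g : prodR 0 0 g = g O.
Proof. unfold prodR. simpl. ring. Qed.

Lemma prodR_first k g : prodR 0 (S k) g = g O * prodR 0 k (fun i => g (S i)).
Proof.
  unfold prodR. rewrite !Nat.sub_0_r.
  change (seq 0 (S (S k))) with (O :: seq 1 (S k)). cbn [map fold_right].
  rewrite map_seq_shift. reflexivity.
Qed.

Lemma prodR_ext lo hi g h : (forall i, g i = h i) -> prodR lo hi g = prodR lo hi h.
Proof. intros H. unfold prodR. f_equal. apply map_ext. auto. Qed.

(** A series whose partial sums stay below [W >= 0] has sum at most [W]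
    (this also covers the divergent case, where [Series] is [0]). *)
Lemma Series_le_bound (a : nat -> R) W :
  0 <= W -> (forall n, sum_n a n <= W) -> Series a <= W.
Proof.
  intros HW Hs. unfold Series.
  assert (Hl : Rbar_le (Lim_seq (sum_n a)) (Lim_seq (fun _ => W))).
  { apply Lim_seq_le_loc. exists 0%nat. intros n _. apply Hs. }
  rewrite Lim_seq_const in Hl.
  destruct (Lim_seq (sum_n a)); simpl in *; [exact Hl | contradiction | exact HW].
Qed.

Lemma back_ind (P : nat -> Prop) (N : nat) :
  P N -> (forall t, (t < N)%nat -> P (S t) -> P t) -> forall t, (t <= N)%nat -> P t.
Proof.
  intros HN HS t Ht. remember (N - t)%nat as d. revert t Ht Heqd.
  induction d as [|d IH]; intros t Ht Hd.
  - replace t with N by lia. exact HN.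
  - apply HS; [lia|]. apply IH; lia.
Qed.

Lemma nat_least (Q : nat -> Prop) n0 :
  Q n0 -> exists n, Q n /\ forall n', Q n' -> (n <= n')%nat.
Proof.
  intros H0.
  destruct (dec_inh_nat_subset_has_unique_least_element Q (fun n => classic (Q n))
              (ex_intro _ n0 H0)) as [n [[Hn Hmin] _]].
  exists n. split; assumption.
Qed.

Lemma Z_greatest (P : Z -> Prop) (B m0 : Z) :
  P m0 -> (forall m, P m -> (m <= B)%Z) -> exists m, P m /\ forall m', P m' -> (m' <= m)%Z.
Proof.
  intros H0 HB.
  destruct (nat_least (fun k => P (B - Z.of_nat k)%Z) (Z.to_nat (B - m0))) as [k [Hk Hmin]].
  - pose proof (HB _ H0). rewrite Z2Nat.id by lia.
    replace (B - (B - m0))%Z with m0 by lia. exact H0.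
  - exists (B - Z.of_nat k)%Z. split; [exact Hk|]. intros m' Hm'.
    pose proof (HB _ Hm'). specialize (Hmin (Z.to_nat (B - m'))).
    rewrite Z2Nat.id in Hmin by lia. replace (B - (B - m'))%Z with m' in Hmin by lia.
    specialize (Hmin Hm'). lia.
Qed.

Lemma Z_least (P : Z -> Prop) (B m0 : Z) :
  P m0 -> (forall m, P m -> (B <= m)%Z) -> exists m, P m /\ forall m', P m' -> (m <= m')%Z.
Proof.
  intros H0 HB.
  destruct (Z_greatest (fun m => P (- m)%Z) (- B) (- m0)) as [m [Hm Hmax]].
  - rewrite Z.opp_involutive. exact H0.
  - intros m Hm. specialize (HB _ Hm). lia.
  - exists (- m)%Z. split; [exact Hm|]. intros m' Hm'. specialize (Hmax (- m')%Z).
    rewrite Z.opp_involutive in Hmax. specialize (Hmax Hm'). lia.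
Qed.

Lemma Z_argmin (h : Z -> R) (a b : Z) : (a <= b)%Z ->
  exists m, (a <= m <= b)%Z /\ forall m', (a <= m' <= b)%Z -> h m <= h m'.
Proof.
  intros Hab. replace b with (a + Z.of_nat (Z.to_nat (b - a)))%Z by lia.
  induction (Z.to_nat (b - a)) as [|n IH].
  - exists a. split; [lia|]. intros m' Hm'. replace m' with a by lia. lra.
  - destruct IH as [m [Hm Hmin]].
    set (c := (a + Z.of_nat (S n))%Z).
    destruct (Rle_dec (h m) (h c)) as [Hle | Hlt].
    + exists m. split; [lia|]. intros m' Hm'.
      destruct (Z.eq_dec m' c) as [-> | Hne]; [exact Hle|]. apply Hmin. lia.
    + exists c. split; [lia|]. intros m' Hm'.
      destruct (Z.eq_dec m' c) as [-> | Hne]; [lra|].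
      assert (h m <= h m') by (apply Hmin; lia). lra.
Qed.

Lemma grid_sub p a b : ongrid p a -> ongrid p b -> ongrid p (a - b).
Proof. intros [m ->] [n ->]. exists (m - n)%Z. unfold zz. rewrite minus_IZR. ring. Qed.

Lemma grid_add p a b : ongrid p a -> ongrid p b -> ongrid p (a + b).
Proof. intros [m ->] [n ->]. exists (m + n)%Z. unfold zz. rewrite plus_IZR. ring. Qed.

Lemma grid_th p : ongrid p (th p).
Proof. exists 1%Z. unfold zz. simpl. ring. Qed.

Section Grid.
Variable p : model.
Hypothesis Hth : 0 < th p.

Lemma zz_lt_iff a b : zz p a < zz p b <-> (a < b)%Z.
Proof.
  unfold zz. split; intros H.
  - apply lt_IZR. apply Rmult_lt_reg_r with (th p); auto.
  - apply Rmult_lt_compat_r; auto. apply IZR_lt; auto.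
Qed.

Lemma zz_le_iff a b : zz p a <= zz p b <-> (a <= b)%Z.
Proof.
  unfold zz. split; intros H.
  - apply le_IZR. apply Rmult_le_reg_r with (th p); auto.
  - apply Rmult_le_compat_r; [lra|]. apply IZR_le; auto.
Qed.

Lemma grid_step x y : ongrid p x -> ongrid p y -> x < y -> x + th p <= y.
Proof.
  intros [a ->] [b ->] H. apply zz_lt_iff in H.
  replace (zz p a + th p) with (zz p (a + 1)) by (unfold zz; rewrite plus_IZR; ring).
  apply zz_le_iff. lia.
Qed.

Lemma zz_bound_above b m : zz p m <= b -> (m <= up (b / th p))%Z.
Proof.
  intros H. destruct (archimed (b / th p)) as [H1 _].
  assert (IZR m <= b / th p).
  { unfold zz in H. apply Rmult_le_reg_r with (th p); auto. unfold Rdiv.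
    rewrite Rmult_assoc, Rinv_l, Rmult_1_r; lra. }
  apply le_IZR. lra.
Qed.

Lemma zz_bound_below b m : b <= zz p m -> (- up (- b / th p) <= m)%Z.
Proof.
  intros H. assert (Hneg : zz p (- m) <= - b) by (unfold zz in *; rewrite opp_IZR; lra).
  apply zz_bound_above in Hneg. lia.
Qed.

Lemma grid_below b : exists m, zz p m < b.
Proof.
  exists (- up (- b / th p))%Z. unfold zz. rewrite opp_IZR.
  destruct (archimed (- b / th p)) as [H _].
  apply Rmult_lt_compat_r with (r := th p) in H; auto.
  unfold Rdiv in H. rewrite Rmult_assoc, Rinv_l, Rmult_1_r in H; lra.
Qed.

Lemma grid_above b : exists m, b < zz p m.
Proof.
  destruct (grid_below (- b)) as [m Hm]. exists (- m)%Z. unfold zz in *.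
  rewrite opp_IZR. lra.
Qed.

Lemma zz_pred_ge j : - th p <= zz p (Z.of_nat j - 1).
Proof.
  replace (- th p) with (zz p (-1)) by (unfold zz; simpl; ring).
  apply zz_le_iff. lia.
Qed.

Lemma Rgreatest_grid (A : R -> Prop) x0 b :
  (forall x, A x -> ongrid p x) -> A x0 -> (forall x, A x -> x <= b) ->
  A (Rgreatest A) /\ forall y, A y -> y <= Rgreatest A.
Proof.
  intros Hg H0 Hb. unfold Rgreatest. apply epsilon_spec.
  destruct (Hg _ H0) as [m0 Hm0].
  destruct (Z_greatest (fun m => A (zz p m)) (up (b / th p)) m0) as [m [Hm Hmax]].
  - subst; auto.
  - intros m Hm. apply zz_bound_above. auto.
  - exists (zz p m). split; auto. intros y Hy. destruct (Hg _ Hy) as [k ->].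
    apply zz_le_iff. auto.
Qed.

Lemma Rleast_grid (A : R -> Prop) x0 b :
  (forall x, A x -> ongrid p x) -> A x0 -> (forall x, A x -> b <= x) ->
  A (Rleast A) /\ forall y, A y -> Rleast A <= y.
Proof.
  intros Hg H0 Hb. unfold Rleast. apply epsilon_spec.
  destruct (Hg _ H0) as [m0 Hm0].
  destruct (Z_least (fun m => A (zz p m)) (- up (- b / th p)) m0) as [m [Hm Hmin]].
  - subst; auto.
  - intros m Hm. apply zz_bound_below. auto.
  - exists (zz p m). split; auto. intros y Hy. destruct (Hg _ Hy) as [k ->].
    apply zz_le_iff. auto.
Qed.

Lemma grid_greatest_below b :
  let g := Rgreatest (fun z => ongrid p z /\ z < b) in ongrid p g /\ g < b.
Proof.
  destruct (grid_below b) as [m Hm].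
  destruct (Rgreatest_grid (fun z => ongrid p z /\ z < b) (zz p m) b) as [Hg _].
  - intros x [Hx _]; exact Hx.
  - split; [exists m; reflexivity | exact Hm].
  - intros x [_ Hx]; lra.
  - exact Hg.
Qed.

Lemma grid_argmin_greatest (H : R -> R) a b :
  ongrid p a -> ongrid p b -> a <= b ->
  let S0 := Rgreatest (fun z => ongrid p z /\ a <= z <= b /\
              forall w, ongrid p w -> a <= w <= b -> H z <= H w) in
  ongrid p S0 /\ a <= S0 <= b.
Proof.
  intros [ia ->] [ib ->] Hab S0. apply zz_le_iff in Hab.
  destruct (Z_argmin (fun m => H (zz p m)) ia ib Hab) as [m [Hm Hmin]].
  destruct (Rgreatest_grid (fun z => ongrid p z /\ zz p ia <= z <= zz p ib /\
              forall w, ongrid p w -> zz p ia <= w <= zz p ib -> H z <= H w)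
              (zz p m) (zz p ib)) as [[HS0 [HS0r _]] _].
  - intros x [Hx _]; exact Hx.
  - split; [exists m; reflexivity|]. split.
    + split; apply zz_le_iff; lia.
    + intros w [k ->] [Hw1 Hw2]. apply zz_le_iff in Hw1. apply zz_le_iff in Hw2.
      apply Hmin. lia.
  - intros x (_ & Hx & _); lra.
  - split; assumption.
Qed.

Lemma grid_index_bound c y : c - th p <= y ->
  zz p (Z.of_nat (Z.to_nat (Int_part ((y - c) / th p) + 1))) <= y + th p - c.
Proof.
  intros Hy. set (q := (y - c) / th p).
  destruct (Z_lt_le_dec (Int_part q + 1) 0).
  - replace (Z.to_nat (Int_part q + 1)) with 0%nat by lia. unfold zz. simpl. lra.
  - rewrite Z2Nat.id by lia. unfold zz. rewrite plus_IZR.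
    destruct (base_Int_part q) as [H1 _].
    assert (q * th p = y - c) by (unfold q; field; lra).
    apply Rle_trans with ((q + 1) * th p); [apply Rmult_le_compat_r; simpl; lra | lra].
Qed.

End Grid.

Section Model.
Variable p : model.
Hypothesis Hp : standing p.
Notation T := (hor p).

Lemma th_pos : 0 < th p. Proof. destruct Hp as (_ & _ & H & _). exact H. Qed.
Lemma alp_pos : 0 < alp p. Proof. destruct Hp as (_ & H & _). lra. Qed.
Lemma T_ge2 : (2 <= T)%nat. Proof. destruct Hp as (H & _). exact H. Qed.

Lemma gam_nonneg t : (t < T)%nat -> 0 <= gam p t.
Proof. destruct Hp as (_ & _ & _ & _ & _ & _ & _ & H). intros Ht. apply (H t Ht). Qed.

Lemma K_nonneg t : (t < T)%nat -> 0 <= KK p t.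
Proof. destruct Hp as (_ & _ & _ & _ & H & _). auto. Qed.

Lemma cdf_of t : (t < T)%nat -> nonneg_cdf (FF p t).
Proof. destruct Hp as (_ & _ & _ & H & _). intros Ht. apply (H t Ht). Qed.

Lemma F_mono t x y : (t < T)%nat -> x <= y -> FF p t x <= FF p t y.
Proof. intros Ht. destruct (cdf_of t Ht) as (H & _). auto. Qed.

Lemma F_neg t x : (t < T)%nat -> x < 0 -> FF p t x = 0.
Proof. intros Ht. destruct (cdf_of t Ht) as (_ & _ & H & _). auto. Qed.

Lemma F_nonneg t x : (t < T)%nat -> 0 <= FF p t x.
Proof.
  intros Ht. rewrite <- (F_neg t (Rmin x (-1)) Ht) by (pose proof (Rmin_r x (-1)); lra).
  apply F_mono; [exact Ht | apply Rmin_l].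
Qed.

(** A nondecreasing function tending to [1] at [+oo] stays below [1]. *)
Lemma F_le1 t x : (t < T)%nat -> FF p t x <= 1.
Proof.
  intros Ht. destruct (cdf_of t Ht) as (Hm & _ & _ & Hl).
  destruct (Rle_dec (FF p t x) 1) as [|Hn]; [assumption|]. exfalso.
  assert (He : 0 < FF p t x - 1) by lra.
  destruct (proj1 (filterlim_locally _ _) Hl (mkposreal _ He)) as [M HM].
  set (y := Rmax M x + 1).
  assert (HMy : M < y) by (pose proof (Rmax_l M x); unfold y; lra).
  assert (Hxy : FF p t x <= FF p t y) by (apply Hm; pose proof (Rmax_r M x); unfold y; lra).
  specialize (HM y HMy). change (Rabs (FF p t y - 1) < FF p t x - 1) in HM.
  apply Rabs_lt_between in HM. simpl in HM. lra.
Qed.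

Lemma Ct_large_right t M : (t < T)%nat -> exists N, forall x, N < x -> M < Ct p t x.
Proof.
  intros Ht. destruct Hp as (_ & _ & _ & _ & _ & H & _). destruct (H t Ht) as (_ & Hl & _).
  apply is_lim_spec in Hl. exact (Hl M).
Qed.

Lemma Ct_large_left t M : (t < T)%nat -> exists N, forall x, x < N -> M < Ct p t x.
Proof.
  intros Ht. destruct Hp as (_ & _ & _ & _ & _ & H & _). destruct (H t Ht) as (_ & _ & Hl).
  apply is_lim_spec in Hl. exact (Hl M).
Qed.

Lemma SU_spec t : (t < T)%nat -> ongrid p (SU p t) /\ Cm p t <= SU p t.
Proof.
  intros Ht. pose proof th_pos as Hth.
  destruct (Ct_large_right t (Ct p t (zn0 p t) + KK p t) Ht) as [N HN].
  destruct (grid_above p Hth (Rmax N (Cm p t))) as [m Hm].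
  pose proof (Rmax_l N (Cm p t)). pose proof (Rmax_r N (Cm p t)).
  destruct (Rleast_grid p Hth
     (fun z => ongrid p z /\ Cm p t <= z /\ Ct p t z > Ct p t (zn0 p t) + KK p t)
     (zz p m) (Cm p t)) as [[H1 [H2 _]] _].
  - intros x [Hx _]; exact Hx.
  - split; [exists m; reflexivity|]. split; [lra|]. apply HN. lra.
  - intros x (_ & Hx & _); exact Hx.
  - split; assumption.
Qed.

Lemma threshold_left t I : (t < T)%nat -> ongrid p I ->
  Rgreatest (fun z => ongrid p z /\ z <= I /\ Ct p t z > Ct p t I + KK p t) + th p <= I.
Proof.
  intros Ht HI. pose proof th_pos as Hth.
  destruct (Ct_large_left t (Ct p t I + KK p t) Ht) as [N HN].
  destruct (grid_below p Hth (Rmin N I)) as [m Hm].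
  pose proof (Rmin_l N I). pose proof (Rmin_r N I).
  destruct (Rgreatest_grid p Hth
     (fun z => ongrid p z /\ z <= I /\ Ct p t z > Ct p t I + KK p t) (zz p m) I)
    as [[Hg [HgI Hgc]] _].
  - intros x [Hx _]; exact Hx.
  - split; [exists m; reflexivity|]. split; [lra|]. apply HN. lra.
  - intros x (_ & Hx & _); exact Hx.
  - apply (grid_step p Hth); [exact Hg | exact HI|].
    destruct HgI as [Hlt | Heq]; [exact Hlt|].
    rewrite Heq in Hgc. pose proof (K_nonneg t Ht). lra.
Qed.

Lemma reorder_level_grid (t : nat) (b : R) (H : R -> R) : (t < T)%nat ->
  let I := Rgreatest (fun z => ongrid p z /\ z < Rmin b (Cm p t)) in
  let Ib := Rgreatest (fun z => ongrid p z /\ z <= I /\ Ct p t z > Ct p t I + KK p t)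
            + th p in
  let S0 := Rgreatest (fun z => ongrid p z /\ I <= z <= SU p t /\
               forall w, ongrid p w -> I <= w <= SU p t -> H z <= H w) in
  ongrid p (if Req_EM_T (KK p t) 0 then S0
            else Rleast (fun z => ongrid p z /\ Ib <= z <= S0 /\ H z <= H S0 + KK p t)).
Proof.
  intros Ht I Ib S0. pose proof th_pos as Hth.
  destruct (grid_greatest_below p Hth (Rmin b (Cm p t))) as [HI HIlt].
  fold I in HI, HIlt. pose proof (Rmin_r b (Cm p t)).
  destruct (SU_spec t Ht) as [HSU HCmSU].
  destruct (grid_argmin_greatest p Hth H I (SU p t) HI HSU ltac:(lra)) as [HS0 HS0r].
  fold S0 in HS0, HS0r.
  destruct (Req_EM_T (KK p t) 0); [exact HS0|].
  assert (HIb : Ib <= I) by (apply threshold_left; assumption).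
  destruct (Rleast_grid p Hth
     (fun z => ongrid p z /\ Ib <= z <= S0 /\ H z <= H S0 + KK p t) S0 Ib) as [[Hs _] _].
  - intros x [Hx _]; exact Hx.
  - pose proof (K_nonneg t Ht). split; [exact HS0|]. split; [split|]; lra.
  - intros x (_ & [Hx _] & _); exact Hx.
  - exact Hs.
Qed.

Lemma s_grid t : (t <= T - 2)%nat -> ongrid p (s_ p t).
Proof.
  intros Ht. pose proof T_ge2. unfold s_.
  destruct (hor p - 1 - t)%nat as [|k] eqn:Hk; [lia|].
  cbn [stg ss]. replace (hor p - 1 - S k)%nat with t by lia.
  exact (reorder_level_grid t (sIb (stg p k) - th p) _ ltac:(lia)).
Qed.

(** Expectations over the discretised demand.  [Fgrid t j] is the value of
    [F_t] at the demand level [z_(j-1)], so that [f_t(j-1)] is its increment. *)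
Definition Fgrid (t j : nat) : R := FF p t (zz p (Z.of_nat j - 1)).

Lemma fprob_Fgrid t j : fprob p t (Z.of_nat j - 1) = Fgrid t (S j) - Fgrid t j.
Proof.
  unfold fprob, Fgrid. replace (Z.of_nat j - 1 + 1)%Z with (Z.of_nat (S j) - 1)%Z by lia.
  reflexivity.
Qed.

Lemma fprob_nonneg t j : (t < T)%nat -> 0 <= fprob p t (Z.of_nat j - 1).
Proof.
  intros Ht. rewrite fprob_Fgrid. unfold Fgrid.
  assert (zz p (Z.of_nat j - 1) <= zz p (Z.of_nat (S j) - 1))
    by (apply (zz_le_iff p th_pos); lia).
  pose proof (F_mono t _ _ Ht H). lra.
Qed.

(** Demand is nonnegative: no mass below [z_0]. *)
Lemma Fgrid_0 t : (t < T)%nat -> Fgrid t 0 = 0.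
Proof. intros Ht. apply F_neg; [exact Ht|]. unfold zz. simpl. pose proof th_pos. lra. Qed.

Lemma demand_sum_le t (g : nat -> R) W N : (t < T)%nat -> (forall j, g j <= W) ->
  sumR 0 N (fun j => g j * fprob p t (Z.of_nat j - 1)) <= W * Fgrid t (S N).
Proof.
  intros Ht Hg.
  replace (W * Fgrid t (S N)) with (W * (Fgrid t (S N) - Fgrid t 0))
    by (rewrite Fgrid_0 by exact Ht; ring).
  apply sumR_telescope_le. intros j. rewrite <- fprob_Fgrid.
  apply Rmult_le_compat_r; [apply fprob_nonneg, Ht | apply Hg].
Qed.

Lemma Esum_le t g W : (t < T)%nat -> 0 <= W ->
  (forall j, g (zz p (Z.of_nat j - 1)) <= W) -> Esum p t g <= W.
Proof.
  intros Ht HW Hg. unfold Esum. apply Series_le_bound; [exact HW|]. intros n.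
  rewrite <- sumR_sum_n. eapply Rle_trans; [apply demand_sum_le; eassumption|].
  pose proof (F_le1 t (zz p (Z.of_nat (S n) - 1)) Ht).
  unfold Fgrid. rewrite <- (Rmult_1_r W) at 2. apply Rmult_le_compat_l; assumption.
Qed.

(** The tail coefficients
      [A_t(y) = sum_(n=1)^(T-1-t) alpha^n gamma_(t+n)
                   prod_(m<n) F_(t+m)(y + (m+1) theta - s_(t+m+1))]  and
      [B_t    = sum_(n=1)^(T-1-t) alpha^n gamma_(t+n)],
    which bound the propagation of a unit perturbation through later stages. *)
Definition Acoef (t : nat) (y : R) : R :=
  sumR 1 (T - 1 - t) (fun n => alp p ^ n * gam p (t + n) *
    prodR 0 (n - 1) (fun m => FF p (t + m) (y + INR (m + 1) * th p - s_ p (t + m + 1)))).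

Definition Bcoef (t : nat) : R := sumR 1 (T - 1 - t) (fun n => alp p ^ n * gam p (t + n)).

Lemma Acoef_last y : Acoef (T - 1) y = 0.
Proof. unfold Acoef. replace (T - 1 - (T - 1))%nat with 0%nat by lia. reflexivity. Qed.

Lemma Bcoef_last : Bcoef (T - 1) = 0.
Proof. unfold Bcoef. replace (T - 1 - (T - 1))%nat with 0%nat by lia. reflexivity. Qed.

Lemma Acoef_rec t y : (t <= T - 2)%nat ->
  Acoef t y = alp p * FF p t (y + th p - s_ p (S t)) * (gam p (S t) + Acoef (S t) (y + th p)).
Proof.
  intros Ht. pose proof T_ge2. unfold Acoef.
  replace (T - 1 - t)%nat with (S (T - 1 - S t)) by lia.
  rewrite sumR_first, sumR_shift by lia. rewrite prodR_single.
  rewrite Rmult_plus_distr_l, <- sumR_scal. f_equal.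
  - rewrite Nat.add_0_r, Nat.add_1_r. simpl. rewrite (Rmult_1_l (th p)). ring.
  - apply sumR_ext. intros n Hn. destruct n as [|n]; [lia|].
    replace (S (S n) - 1)%nat with (S n) by lia. rewrite prodR_first.
    replace (S n - 1)%nat with n by lia.
    replace (prodR 0 n (fun m => FF p (t + S m) (y + INR (S m + 1) * th p - s_ p (t + S m + 1))))
      with (prodR 0 n (fun m => FF p (S t + m) (y + th p + INR (m + 1) * th p - s_ p (S t + m + 1)))).
    + replace (t + S (S n))%nat with (S t + S n)%nat by lia.
      rewrite !Nat.add_0_r, !Nat.add_1_r. simpl pow. simpl INR. rewrite (Rmult_1_l (th p)). ring.
    + apply prodR_ext. intros m. replace (t + S m)%nat with (S t + m)%nat by lia.
      f_equal. rewrite !plus_INR, !S_INR. simpl INR. ring.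
Qed.

Lemma Bcoef_rec t : (t <= T - 2)%nat -> Bcoef t = alp p * (gam p (S t) + Bcoef (S t)).
Proof.
  intros Ht. pose proof T_ge2. unfold Bcoef.
  replace (T - 1 - t)%nat with (S (T - 1 - S t)) by lia.
  rewrite sumR_first, sumR_shift by lia. rewrite Rmult_plus_distr_l, <- sumR_scal. f_equal.
  - rewrite Nat.add_1_r. simpl. ring.
  - apply sumR_ext. intros n _. replace (t + S n)%nat with (S t + n)%nat by lia.
    simpl. ring.
Qed.

Lemma Acoef_nonneg t y : (t <= T - 1)%nat -> 0 <= Acoef t y.
Proof.
  intros Ht. revert y. pose proof T_ge2. pose proof alp_pos.
  apply (back_ind (fun t => forall y, 0 <= Acoef t y)) with (N := (T - 1)%nat); [| |exact Ht].
  - intros y. rewrite Acoef_last. lra.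
  - intros t' Ht' IH y. rewrite Acoef_rec by lia.
    pose proof (F_nonneg t' (y + th p - s_ p (S t')) ltac:(lia)).
    pose proof (gam_nonneg (S t') ltac:(lia)). specialize (IH (y + th p)).
    apply Rmult_le_pos; [apply Rmult_le_pos|]; lra.
Qed.

Lemma Acoef_mono t y y' : (t <= T - 1)%nat -> y <= y' -> Acoef t y <= Acoef t y'.
Proof.
  intros Ht. revert y y'. pose proof T_ge2. pose proof alp_pos.
  apply (back_ind (fun t => forall y y', y <= y' -> Acoef t y <= Acoef t y'))
    with (N := (T - 1)%nat); [| |exact Ht].
  - intros y y' _. rewrite !Acoef_last. lra.
  - intros t' Ht' IH y y' Hy. rewrite (Acoef_rec t' y), (Acoef_rec t' y') by lia.
    pose proof (F_nonneg t' (y + th p - s_ p (S t')) ltac:(lia)).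
    pose proof (F_mono t' (y + th p - s_ p (S t')) (y' + th p - s_ p (S t')) ltac:(lia) ltac:(lra)).
    pose proof (gam_nonneg (S t') ltac:(lia)).
    pose proof (Acoef_nonneg (S t') (y + th p) ltac:(lia)).
    specialize (IH (y + th p) (y' + th p) ltac:(lra)).
    apply Rmult_le_compat; [apply Rmult_le_pos; lra | lra | | lra].
    apply Rmult_le_compat_l; lra.
Qed.

Lemma Acoef_le_Bcoef t y : (t <= T - 1)%nat -> Acoef t y <= Bcoef t.
Proof.
  intros Ht. revert y. pose proof T_ge2. pose proof alp_pos.
  apply (back_ind (fun t => forall y, Acoef t y <= Bcoef t)) with (N := (T - 1)%nat);
    [| |exact Ht].
  - intros y. rewrite Acoef_last, Bcoef_last. lra.
  - intros t' Ht' IH y. rewrite Acoef_rec, Bcoef_rec by lia.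
    pose proof (F_nonneg t' (y + th p - s_ p (S t')) ltac:(lia)).
    pose proof (F_le1 t' (y + th p - s_ p (S t')) ltac:(lia)).
    pose proof (gam_nonneg (S t') ltac:(lia)).
    pose proof (Acoef_nonneg (S t') (y + th p) ltac:(lia)).
    specialize (IH (y + th p)).
    rewrite Rmult_assoc. apply Rmult_le_compat_l; [lra|].
    rewrite <- (Rmult_1_l (gam p (S t') + Bcoef (S t'))).
    apply Rmult_le_compat; lra.
Qed.

Definition psi_gen (bar : bool) (t : nat) : R -> R -> R := fst (psiphi p bar (T - 1 - t)).
Definition phi_gen (bar : bool) (t : nat) : R -> R -> R := snd (psiphi p bar (T - 1 - t)).

Lemma psi_gen_unfold bar t x y : (t <= T - 2)%nat ->
  psi_gen bar t x y =
    if Rlt_dec y (s_ p (S t) - th p) then gam p t * x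
    else gam p t * x + alp p *
      sumR 0 (Z.to_nat (nidx p t y))
        (fun j => phi_gen bar (S t) x (y - zz p (Z.of_nat j - 1)) * fprob p t (Z.of_nat j - 1)).
Proof.
  intros Ht. pose proof T_ge2. unfold psi_gen, phi_gen.
  replace (T - 1 - t)%nat with (S (T - 1 - S t)) by lia.
  cbn [psiphi fst]. replace (T - 1 - S (T - 1 - S t))%nat with t by lia.
  reflexivity.
Qed.

Lemma phi_gen_unfold bar t x y : (t <= T - 2)%nat ->
  phi_gen bar t x y =
    if Rlt_dec y (s_ p t) then 0
    else if Rlt_dec (y - x) (s_ p t)
         then psi_gen bar t (y - s_ p t + (if bar then th p else 0)) y
         else psi_gen bar t x y.
Proof.
  intros Ht. pose proof T_ge2. unfold psi_gen, phi_gen.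
  replace (T - 1 - t)%nat with (S (T - 1 - S t)) by lia.
  cbn [psiphi fst snd]. replace (T - 1 - S (T - 1 - S t))%nat with t by lia.
  reflexivity.
Qed.

Lemma psi_gen_last bar x y : psi_gen bar (T - 1) x y = gam p (T - 1) * x.
Proof. unfold psi_gen. replace (T - 1 - (T - 1))%nat with 0%nat by lia. reflexivity. Qed.

Lemma phi_gen_last bar x y :
  phi_gen bar (T - 1) x y = if Rlt_dec y (s_ p (T - 1)) then 0 else gam p (T - 1) * x.
Proof. unfold phi_gen. replace (T - 1 - (T - 1))%nat with 0%nat by lia. reflexivity. Qed.

(** The barred estimates are only controlled at grid arguments. *)
Definition grid_if (bar : bool) (x y : R) : Prop := bar = true -> ongrid p x /\ ongrid p y.

Definition A_bounded (bar : bool) (t : nat) (f : R -> R -> R) : Prop :=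
  forall x y, 0 <= x -> grid_if bar x y -> f x y <= x * (gam p t + Acoef t y).

(** The bound passes from [psi_t] to [phi_t]: [phi_t] either vanishes or
    evaluates [psi_t] at a first argument no larger than [x]; for the barred
    version this uses that [y - x] and [s_t] are grid points. *)
Lemma phi_bound_of_psi bar t : (t <= T - 1)%nat ->
  A_bounded bar t (psi_gen bar t) -> A_bounded bar t (phi_gen bar t).
Proof.
  intros Ht Hpsi x y Hx Hb. pose proof th_pos. pose proof T_ge2.
  assert (Hc : 0 <= gam p t + Acoef t y)
    by (pose proof (gam_nonneg t ltac:(lia)); pose proof (Acoef_nonneg t y Ht); lra).
  assert (Hbound_nonneg : 0 <= x * (gam p t + Acoef t y)) by (apply Rmult_le_pos; lra).
  destruct (Nat.eq_dec t (T - 1)) as [-> | Hne].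
  - rewrite phi_gen_last. destruct Rlt_dec; [exact Hbound_nonneg|]. rewrite Acoef_last. lra.
  - rewrite phi_gen_unfold by lia. destruct Rlt_dec as [|Hys]; [exact Hbound_nonneg|].
    destruct Rlt_dec as [Hyx|]; [|apply Hpsi; assumption].
    assert (Hx' : y - s_ p t + (if bar then th p else 0) <= x).
    { destruct bar; [|lra]. destruct (Hb eq_refl) as [Hgx Hgy].
      pose proof (grid_step p th_pos _ _ (grid_sub p _ _ Hgy Hgx)
                    (s_grid t ltac:(lia)) Hyx). lra. }
    eapply Rle_trans; [apply Hpsi|].
    + destruct bar; lra.
    + intros Hbar. subst bar. destruct (Hb eq_refl) as [Hgx Hgy]. split; [|exact Hgy].
      apply grid_add; [apply grid_sub; [exact Hgy | apply s_grid; lia] | apply grid_th].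
    + apply Rmult_le_compat_r; lra.
Qed.

(** Main estimate on [psi_t] and [psibar_t]: propagating backwards, the
    expectation of [phi_(t+1)] over the demand is at most
    [F_t(y + theta - s_(t+1))] times its bound at [y + theta], which is
    exactly the recursion satisfied by [A_t]. *)
Lemma psi_bound bar t : (t <= T - 1)%nat -> A_bounded bar t (psi_gen bar t).
Proof.
  intros Ht. pose proof T_ge2. pose proof alp_pos. pose proof th_pos.
  apply (back_ind (fun t => A_bounded bar t (psi_gen bar t))) with (N := (T - 1)%nat);
    [| |exact Ht].
  - intros x y Hx _. rewrite psi_gen_last, Acoef_last. lra.
  - intros t' Ht' IH x y Hx Hb.
    pose proof (phi_bound_of_psi bar (S t') ltac:(lia) IH) as Hphi.
    pose proof (gam_nonneg (S t') ltac:(lia)). pose proof (gam_nonneg t' ltac:(lia)).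
    pose proof (Acoef_nonneg t' y ltac:(lia)).
    rewrite psi_gen_unfold by lia. destruct Rlt_dec as [|Hys].
    { assert (0 <= x * Acoef t' y) by (apply Rmult_le_pos; lra). lra. }
    set (W := x * (gam p (S t') + Acoef (S t') (y + th p))).
    assert (HW : 0 <= W).
    { pose proof (Acoef_nonneg (S t') (y + th p) ltac:(lia)). apply Rmult_le_pos; lra. }
    set (N := Z.to_nat (nidx p t' y)).
    assert (Hterm : forall j, phi_gen bar (S t') x (y - zz p (Z.of_nat j - 1)) <= W).
    { intros j. pose proof (zz_pred_ge p th_pos j).
      eapply Rle_trans; [apply Hphi; [exact Hx|]|].
      - intros Hbar. destruct (Hb Hbar). split; [assumption|].
        apply grid_sub; [assumption | exists (Z.of_nat j - 1)%Z; reflexivity].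
      - apply Rmult_le_compat_l; [exact Hx|].
        pose proof (Acoef_mono (S t') (y - zz p (Z.of_nat j - 1)) (y + th p)
                      ltac:(lia) ltac:(lra)). lra. }
    assert (Hmass : Fgrid t' (S N) <= FF p t' (y + th p - s_ p (S t'))).
    { unfold Fgrid. replace (Z.of_nat (S N) - 1)%Z with (Z.of_nat N) by lia.
      apply F_mono; [lia|]. apply (grid_index_bound p th_pos). lra. }
    pose proof (demand_sum_le t' _ W N ltac:(lia) Hterm) as Hsum.
    rewrite (Acoef_rec t' y) by lia.
    apply Rle_trans with (gam p t' * x + alp p * (W * FF p t' (y + th p - s_ p (S t')))).
    + apply Rplus_le_compat_l, Rmult_le_compat_l; [lra|].
      eapply Rle_trans; [exact Hsum|]. apply Rmult_le_compat_l; assumption.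
    + unfold W. right. ring.
Qed.

Lemma omega_unfold t : (t <= T - 2)%nat ->
  omegaF p t = (fun x => psi_gen false t (th p) x - gam p t * th p
                         + alp p * Esum p t (fun z => omegabar p (S t) (x - z))) /\
  etaF p t = psi_gen true t (th p) (SU p t) + omegaF p t (SU p t) /\
  omegabar p t = (fun x => if Rle_dec x (SU p t) then etaF p t
                           else Rmax (etaF p t) (omegaF p t x)).
Proof.
  intros Ht. pose proof T_ge2. unfold omegaF, etaF, omegabar.
  replace (T - 1 - t)%nat with (S (T - 1 - S t)) by lia.
  cbn [omk fst snd]. replace (T - 1 - S (T - 1 - S t))%nat with t by lia.
  split; [|split]; reflexivity.
Qed.

Lemma omegabar_last x : omegabar p (T - 1) x = 0.
Proof. unfold omegabar. replace (T - 1 - (T - 1))%nat with 0%nat by lia. reflexivity. Qed.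

Definition Gcoef (t : nat) (w : R) : R :=
  gam p t + Acoef t (SU p t) + Acoef t (Rmax w (SU p t)).

Lemma Gcoef_nonneg t w : (t <= T - 2)%nat -> 0 <= Gcoef t w.
Proof.
  intros Ht. pose proof T_ge2. unfold Gcoef. pose proof (gam_nonneg t ltac:(lia)).
  pose proof (Acoef_nonneg t (SU p t) ltac:(lia)).
  pose proof (Acoef_nonneg t (Rmax w (SU p t)) ltac:(lia)). lra.
Qed.

Lemma Gcoef_mono t w w' : (t <= T - 2)%nat -> w <= w' -> Gcoef t w <= Gcoef t w'.
Proof.
  intros Ht Hw. pose proof T_ge2. unfold Gcoef.
  pose proof (Acoef_mono t _ _ ltac:(lia) (Rle_max_compat_r w w' (SU p t) Hw)). lra.
Qed.

Lemma Gcoef_le t w : (t <= T - 2)%nat -> Gcoef t w <= gam p t + 2 * Bcoef t.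
Proof.
  intros Ht. pose proof T_ge2. unfold Gcoef.
  pose proof (Acoef_le_Bcoef t (SU p t) ltac:(lia)).
  pose proof (Acoef_le_Bcoef t (Rmax w (SU p t)) ltac:(lia)). lra.
Qed.

Lemma omegabar_step t W : (t <= T - 2)%nat ->
  (forall x, omegabar p (S t) x <= W x) -> (forall x y, x <= y -> W x <= W y) ->
  (forall x, 0 <= W x) ->
  forall z, omegabar p t z <= th p * Gcoef t z + alp p * W (Rmax z (SU p t) + th p).
Proof.
  intros Ht Hb Hm Hn z. pose proof th_pos. pose proof alp_pos. pose proof T_ge2.
  destruct (omega_unfold t Ht) as (Ho & He & Hob).
  pose proof (gam_nonneg t ltac:(lia)).
  assert (Homega : forall x, omegaF p t x <= th p * Acoef t x + alp p * W (x + th p)).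
  { intros x. rewrite Ho.
    pose proof (psi_bound false t ltac:(lia) (th p) x ltac:(lra) ltac:(discriminate)) as Hpsi.
    assert (HE : Esum p t (fun z0 => omegabar p (S t) (x - z0)) <= W (x + th p)).
    { apply Esum_le; [lia | apply Hn|]. intros j. eapply Rle_trans; [apply Hb|].
      apply Hm. pose proof (zz_pred_ge p th_pos j). lra. }
    apply Rmult_le_compat_l with (r := alp p) in HE; lra. }
  assert (Heta : etaF p t <= th p * (gam p t + 2 * Acoef t (SU p t))
                             + alp p * W (SU p t + th p)).
  { rewrite He. destruct (SU_spec t ltac:(lia)) as [HSU _].
    pose proof (psi_bound true t ltac:(lia) (th p) (SU p t) ltac:(lra)
                  (fun _ => conj (grid_th p) HSU)).
    specialize (Homega (SU p t)). lra. }
  rewrite Hob. unfold Gcoef. destruct Rle_dec as [Hz|Hz].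
  - rewrite Rmax_right by exact Hz. lra.
  - rewrite (Rmax_left z (SU p t)) by lra.
    pose proof (Acoef_mono t (SU p t) z ltac:(lia) ltac:(lra)).
    pose proof (Hm (SU p t + th p) (z + th p) ltac:(lra)).
    pose proof (Acoef_nonneg t (SU p t) ltac:(lia)).
    apply Rmax_lub.
    + apply Rle_trans with (th p * (gam p t + 2 * Acoef t (SU p t)) + alp p * W (SU p t + th p));
        [exact Heta|].
      apply Rplus_le_compat; apply Rmult_le_compat_l; lra.
    + specialize (Homega z).
      assert (0 <= th p * (gam p t + Acoef t (SU p t))) by (apply Rmult_le_pos; lra). lra.
Qed.

Lemma mu_shift t z i : mu p t z (S i) = mu p (S t) (Rmax z (SU p t) + th p) i.
Proof.
  induction i as [|i IH].
  - simpl. rewrite Nat.add_0_r. reflexivity.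
  - change (mu p t z (S (S i))) with (Rmax (mu p t z (S i)) (SU p (t + S i)) + th p).
    rewrite IH. simpl. replace (t + S i)%nat with (S (t + i)) by lia. reflexivity.
Qed.

Lemma mu_mono t z z' i : z <= z' -> mu p t z i <= mu p t z' i.
Proof.
  intros H. induction i as [|i IH]; simpl; [exact H|].
  apply Rplus_le_compat_r, Rle_max_compat_r, IH.
Qed.

Lemma Uomega_as_sum t z : Uomega p t z =
  th p * sumR 0 (T - 2 - t) (fun i => alp p ^ i * Gcoef (t + i) (mu p t z i)).
Proof.
  unfold Uomega. rewrite <- Rmult_plus_distr_l, <- sumR_plus. f_equal.
  apply sumR_ext. intros i _. unfold Gcoef, Acoef.
  replace (T - 1 - t - i)%nat with (T - 1 - (t + i))%nat by lia.
  rewrite !Rmult_plus_distr_l, Rplus_assoc. f_equal.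
  rewrite <- !sumR_scal, <- sumR_plus. apply sumR_ext. intros n _.
  rewrite pow_add. ring.
Qed.

Lemma Ubar_as_sum t : Ubar p t =
  th p * sumR 0 (T - 2 - t) (fun i => alp p ^ i * (gam p (t + i) + 2 * Bcoef (t + i))).
Proof.
  unfold Ubar.
  replace (sumR 0 (T - 2 - t) (fun i => sumR 1 (T - 1 - t - i)
             (fun n => alp p ^ (n + i) * gam p (t + i + n))))
    with (sumR 0 (T - 2 - t) (fun i => alp p ^ i * Bcoef (t + i))).
  - rewrite (Rmult_comm 2 (th p)), Rmult_assoc, <- (sumR_scal _ _ 2).
    rewrite <- Rmult_plus_distr_l, <- sumR_plus.
    f_equal. apply sumR_ext. intros i _. ring.
  - apply sumR_ext. intros i _. unfold Bcoef.
    replace (T - 1 - t - i)%nat with (T - 1 - (t + i))%nat by lia.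
    rewrite <- sumR_scal. apply sumR_ext. intros n _. rewrite pow_add. ring.
Qed.

(** [U^omega_t] obeys the same recursion as the bound of [omegabar_step]. *)
Lemma Uomega_last z : Uomega p (T - 2) z = th p * Gcoef (T - 2) z.
Proof.
  rewrite Uomega_as_sum. replace (T - 2 - (T - 2))%nat with 0%nat by lia.
  rewrite sumR_single. simpl. rewrite Nat.add_0_r. ring.
Qed.

Lemma Uomega_rec t z : (t < T - 2)%nat ->
  Uomega p t z = th p * Gcoef t z + alp p * Uomega p (S t) (Rmax z (SU p t) + th p).
Proof.
  intros Ht. rewrite !Uomega_as_sum. replace (T - 2 - t)%nat with (S (T - 2 - S t)) by lia.
  rewrite sumR_first, sumR_shift by lia. rewrite Rmult_plus_distr_l. f_equal.
  - simpl. rewrite Nat.add_0_r. ring.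
  - rewrite <- !sumR_scal. apply sumR_ext. intros i _.
    rewrite mu_shift. replace (t + S i)%nat with (S t + i)%nat by lia. simpl. ring.
Qed.

Lemma Uomega_nonneg t z : (t <= T - 2)%nat -> 0 <= Uomega p t z.
Proof.
  intros Ht. pose proof th_pos. pose proof alp_pos. rewrite Uomega_as_sum.
  apply Rmult_le_pos; [lra|]. apply sumR_nonneg. intros i Hi.
  apply Rmult_le_pos; [apply pow_le; lra | apply Gcoef_nonneg; lia].
Qed.

Lemma Uomega_mono t z z' : (t <= T - 2)%nat -> z <= z' -> Uomega p t z <= Uomega p t z'.
Proof.
  intros Ht Hz. pose proof th_pos. pose proof alp_pos. rewrite !Uomega_as_sum.
  apply Rmult_le_compat_l; [lra|]. apply sumR_le. intros i Hi.
  apply Rmult_le_compat_l; [apply pow_le; lra|].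
  apply Gcoef_mono; [lia | apply mu_mono, Hz].
Qed.

(** Second inequality of the theorem: [G_t <= gamma_t + 2 B_t] termwise. *)
Lemma Uomega_le_Ubar t z : (t <= T - 2)%nat -> Uomega p t z <= Ubar p t.
Proof.
  intros Ht. pose proof th_pos. pose proof alp_pos. rewrite Uomega_as_sum, Ubar_as_sum.
  apply Rmult_le_compat_l; [lra|]. apply sumR_le. intros i Hi.
  apply Rmult_le_compat_l; [apply pow_le; lra | apply Gcoef_le; lia].
Qed.

(** First inequality of the theorem, by backward induction from [T-2]:
    [U^omega_(t+1)] is a valid [W] in [omegabar_step], and [U^omega_t] is
    exactly the resulting bound. *)
Lemma omegabar_le_Uomega t z : (t <= T - 2)%nat -> omegabar p t z <= Uomega p t z.
Proof.
  intros Ht. revert z. pose proof T_ge2. pose proof alp_pos.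
  apply (back_ind (fun t => forall z, omegabar p t z <= Uomega p t z))
    with (N := (T - 2)%nat); [| |exact Ht].
  - intros z. rewrite Uomega_last.
    pose proof (omegabar_step (T - 2) (fun _ => 0) ltac:(lia)) as Hstep.
    replace (S (T - 2)) with (T - 1)%nat in Hstep by lia.
    specialize (Hstep (fun x => Req_le _ _ (omegabar_last x))
                      (fun _ _ _ => Rle_refl 0) (fun _ => Rle_refl 0) z).
    lra.
  - intros t' Ht' IH z. rewrite Uomega_rec by exact Ht'.
    apply omegabar_step; [lia | exact IH | |].
    + intros x y Hxy. apply Uomega_mono; [lia | exact Hxy].
    + intros x. apply Uomega_nonneg. lia.
Qed.

End Model.

Theorem theorem4p3 (p : model) (Hp : standing p) (j : Z) (t : nat)
  (Ht : (t <= hor p - 2)%nat) :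
  omegabar p t (zz p j) <= Uomega p t (zz p j) <= Ubar p t.
Proof.
  split.
  - exact (omegabar_le_Uomega p Hp t (zz p j) Ht).
  - exact (Uomega_le_Ubar p Hp t (zz p j) Ht).
Qed.
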